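(* Let $\lambda>1$ and $\Lambda>1$, and set $s=1/(\lambda-1)$. For $\nu>0$ and $\Lambda'\in\{1,\Lambda\}$ let $\xi_{\Lambda'}(\nu)$ be the unique positive real root of $\xi^{3}+(1+s)\nu\xi^{2}-\Lambda'\xi-s\nu\Lambda'=0$, and define $$\tilde{\varepsilon}(\nu)=\frac{\frac{\nu}{\lambda-1}\left(\frac{\Lambda}{\xi_1(\nu)\xi_\Lambda(\nu)}+\lambda\right)+\xi_1(\nu)+\xi_\Lambda(\nu)}{\frac{\nu}{\lambda-1}\left(\Lambda+\frac{\Lambda}{\xi_1(\nu)\xi_\Lambda(\nu)}+\lambda-1\right)+\Lambda\xi_1(\nu)+\xi_\Lambda(\nu)}.$$ Then $$\tilde{\varepsilon}(\nu)=\frac{1}{\sqrt{\Lambda}}+\frac{\sqrt{\Lambda}-1}{2\Lambda}\,\nu+O(\nu^{2})\quad(\nu\to0),$$ and $$\tilde{\varepsilon}(\nu)=\frac{\lambda}{\sqrt{\Lambda}+\lambda-1}-\frac{(\lambda-1)^{2}(\sqrt{\Lambda}-1)(\sqrt{\Lambda}+2)}{2\nu\sqrt{\lambda}\,(\sqrt{\Lambda}+\lambda-1)^{2}}+O\!\left(\frac{1}{\nu^{2}}\right)\quad(\nu\to\infty).$$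
   Context: $\tilde{\varepsilon}(\nu)=\varepsilon/\varepsilon_c$ is the normalized applied strain as a function of the dimensionless crack velocity $\nu$ in a minimal viscoelastic (Zener-element) crack model, where $\lambda=E_\infty/E_0$ is the ratio of glassy to rubbery moduli and $\Lambda=L/l$ is the ratio of sheet height to lattice spacing. For $s,\nu,\Lambda'>0$ the cubic defining $\xi_{\Lambda'}$ has exactly one positive real root. *)

From Stdlib Require Import Reals.
Open Scope R_scope.

Definition xi_cubic (s Lp nu x : R) : R :=
  x ^ 3 + (1 + s) * nu * x ^ 2 - Lp * x - s * nu * Lp.

(* normalized strain, given the values x1 = xi_1(nu), xL = xi_Lambda(nu) *)
Definition eps_tilde (lam Lam x1 xL nu : R) : R :=
  (nu / (lam - 1) * (Lam / (x1 * xL) + lam) + x1 + xL) /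
  (nu / (lam - 1) * (Lam + Lam / (x1 * xL) + lam - 1) + Lam * x1 + xL).

(** Write [lam = m^2] and [Lam = r^2].  Multiplied by [m^2 - 1], the cubic for [xi_(r^2)]
    becomes [(m^2-1) xi (xi^2 - r^2) = nu (r^2 - m^2 xi^2)].  Hence [r/m < xi < r], and solving
    this balance for [xi - r] (resp., with [t = 1/nu], for [xi - r/m]) twice gives exact
    remainders [xi = r - nu/2 + nu^2 R(xi)] and [xi = r/m + c t + t^2 R'(xi)] with [R], [R']
    rational and bounded on [(r/m, r)].  The normalized strain is a rational expression in
    [nu] (resp. in [t], after multiplying numerator and denominator by [t]) and the two
    roots, and first-order expansions at [0+] propagate through sums, products and quotients
    whose divisor has a nonzero constant term. *)

From Stdlib Require Import Reals Lra Psatz.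
Open Scope R_scope.

(** * First-order expansions at [0+] *)

Definition near0 (P : R -> Prop) : Prop :=
  exists d, 0 < d /\ forall x, 0 < x < d -> P x.

Definition bigO (n : nat) (f : R -> R) : Prop :=
  exists C, near0 (fun x => Rabs (f x) <= C * x ^ n).

Definition expands (f : R -> R) (a0 a1 : R) : Prop :=
  bigO 2 (fun x => f x - (a0 + a1 * x)).

Lemma near0_lt e : 0 < e -> near0 (fun x => x < e).
Proof. intros He. exists e. split; [lra | tauto]. Qed.

Lemma near0_always (P : R -> Prop) : (forall x, 0 < x -> P x) -> near0 P.
Proof. intros HP. exists 1. split; [lra |]. intros x Hx. apply HP; lra. Qed.

Lemma near0_and_impl (P Q S : R -> Prop) :
  (forall x, 0 < x -> P x -> Q x -> S x) -> near0 P -> near0 Q -> near0 S.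
Proof.
  intros HS [d1 [Hd1 HP]] [d2 [Hd2 HQ]]. exists (Rmin d1 d2). split.
  - now apply Rmin_pos.
  - intros x Hx. pose proof (Rmin_l d1 d2). pose proof (Rmin_r d1 d2).
    apply HS; [lra | apply HP | apply HQ]; lra.
Qed.

Lemma near0_impl (P Q : R -> Prop) :
  (forall x, 0 < x -> P x -> Q x) -> near0 P -> near0 Q.
Proof. intros HQ HP. exact (near0_and_impl P P Q (fun x Hx H _ => HQ x Hx H) HP HP). Qed.

Lemma bigO_ext n f g : bigO n f -> near0 (fun x => f x = g x) -> bigO n g.
Proof.
  intros [C Hf] Hfg. exists C. refine (near0_and_impl _ _ _ _ Hf Hfg).
  intros x _ Hx <-. exact Hx.
Qed.

Lemma bigO_bounded f C : (forall x, 0 < x -> Rabs (f x) <= C) -> bigO 0 f.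
Proof. intros Hf. exists C. apply near0_always. intros x Hx. rewrite Rmult_1_r. auto. Qed.

Lemma bigO_const c : bigO 0 (fun _ => c).
Proof. apply (bigO_bounded _ (Rabs c)). intros; lra. Qed.

Lemma bigO_pow n : bigO n (fun x => x ^ n).
Proof.
  exists 1. apply near0_always. intros x Hx.
  rewrite Rabs_pos_eq by (apply pow_le; lra). lra.
Qed.

Lemma bigO_plus n f g : bigO n f -> bigO n g -> bigO n (fun x => f x + g x).
Proof.
  intros [C1 Hf] [C2 Hg]. exists (C1 + C2). refine (near0_and_impl _ _ _ _ Hf Hg).
  intros x _ Hfx Hgx. eapply Rle_trans; [apply Rabs_triang | lra].
Qed.

Lemma bigO_opp n f : bigO n f -> bigO n (fun x => - f x).
Proof.
  intros [C Hf]. exists C. refine (near0_impl _ _ _ Hf).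
  intros x _ Hfx. now rewrite Rabs_Ropp.
Qed.

Lemma bigO_minus n f g : bigO n f -> bigO n g -> bigO n (fun x => f x - g x).
Proof. intros Hf Hg. exact (bigO_plus n f _ Hf (bigO_opp n g Hg)). Qed.

Lemma bigO_mult n k f g : bigO n f -> bigO k g -> bigO (n + k) (fun x => f x * g x).
Proof.
  intros [C1 Hf] [C2 Hg]. exists (C1 * C2). refine (near0_and_impl _ _ _ _ Hf Hg).
  intros x _ Hfx Hgx. rewrite Rabs_mult, pow_add.
  replace (C1 * C2 * (x ^ n * x ^ k)) with ((C1 * x ^ n) * (C2 * x ^ k)) by ring.
  apply Rmult_le_compat; auto using Rabs_pos.
Qed.

Lemma bigO_weaken n f : bigO (S n) f -> bigO n f.
Proof.
  intros [C Hf]. exists (Rabs C).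
  refine (near0_and_impl _ _ _ _ Hf (near0_lt 1 Rlt_0_1)).
  intros x Hx HfC Hx1. simpl in HfC.
  assert (0 <= x ^ n) by (apply pow_le; lra).
  assert (C * (x * x ^ n) <= Rabs C * x ^ n).
  { replace (C * (x * x ^ n)) with (x * (C * x ^ n)) by ring.
    assert (C * x ^ n <= Rabs C * x ^ n) by (apply Rmult_le_compat_r; auto using RRle_abs).
    assert (0 <= Rabs C * x ^ n) by (apply Rmult_le_pos; auto using Rabs_pos).
    nra. }
  lra.
Qed.

Lemma bigO_small f e : bigO 1 f -> 0 < e -> near0 (fun x => Rabs (f x) <= e).
Proof.
  intros [C Hf] He. pose proof (Rabs_pos C) as HC.
  refine (near0_and_impl _ _ _ _ Hf (near0_lt (e / (Rabs C + 1)) _)).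
  - intros x Hx HfC Hxe. rewrite pow_1 in HfC.
    assert (C * x <= Rabs C * x) by (apply Rmult_le_compat_r; [lra | apply RRle_abs]).
    assert (Rabs C * x <= e).
    { apply (Rmult_lt_compat_r (Rabs C + 1)) in Hxe; [| lra].
      replace (e / (Rabs C + 1) * (Rabs C + 1)) with e in Hxe by (field; lra).
      nra. }
    lra.
  - apply Rdiv_lt_0_compat; lra.
Qed.

Lemma bigO_inv g c : 0 < c -> near0 (fun x => c <= Rabs (g x)) -> bigO 0 (fun x => / g x).
Proof.
  intros Hc Hg. exists (/ c). refine (near0_impl _ _ _ Hg).
  intros x _ Hgx. rewrite Rabs_inv, Rmult_1_r. apply Rinv_le_contravar; auto.
Qed.

Lemma bigO_inv_pos g c : 0 < c -> (forall x, 0 < x -> c <= g x) -> bigO 0 (fun x => / g x).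
Proof.
  intros Hc Hg. apply (bigO_inv _ c Hc). apply near0_always. intros x Hx.
  specialize (Hg x Hx). rewrite Rabs_pos_eq; lra.
Qed.

Lemma bigO_zero n : bigO n (fun _ => 0).
Proof.
  exists 0. apply near0_always. intros x _. rewrite Rabs_R0, Rmult_0_l. lra.
Qed.

Lemma bigO_affine a0 a1 : bigO 0 (fun x => a0 + a1 * x).
Proof.
  apply bigO_plus; [apply bigO_const |].
  apply bigO_weaken.
  apply (bigO_ext _ _ _ (bigO_mult 0 1 _ _ (bigO_const a1) (bigO_pow 1))).
  apply near0_always. intros x _. now rewrite pow_1.
Qed.

Lemma expands_ext f g a0 a1 :
  expands f a0 a1 -> near0 (fun x => f x = g x) -> expands g a0 a1.
Proof.
  intros Hf Hfg. apply (bigO_ext _ _ _ Hf).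
  refine (near0_impl _ _ _ Hfg). intros x _ ->. reflexivity.
Qed.

Lemma expands_eq f a0 a1 b0 b1 : expands f a0 a1 -> a0 = b0 -> a1 = b1 -> expands f b0 b1.
Proof. now intros Hf <- <-. Qed.

Lemma expands_bounded f a0 a1 : expands f a0 a1 -> bigO 0 f.
Proof.
  intros Hf. apply bigO_weaken, bigO_weaken in Hf.
  apply (bigO_ext _ _ _ (bigO_plus _ _ _ (bigO_affine a0 a1) Hf)).
  apply near0_always. intros x _. ring.
Qed.

Lemma expands_const c : expands (fun _ => c) c 0.
Proof.
  apply (bigO_ext _ _ _ (bigO_zero 2)). apply near0_always. intros x _. ring.
Qed.

Lemma expands_id : expands (fun x => x) 0 1.
Proof.
  apply (bigO_ext _ _ _ (bigO_zero 2)). apply near0_always. intros x _. ring.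
Qed.

Lemma expands_plus f g a0 a1 b0 b1 :
  expands f a0 a1 -> expands g b0 b1 ->
  expands (fun x => f x + g x) (a0 + b0) (a1 + b1).
Proof.
  intros Hf Hg. apply (bigO_ext _ _ _ (bigO_plus _ _ _ Hf Hg)).
  apply near0_always. intros x _. ring.
Qed.

Lemma expands_opp f a0 a1 : expands f a0 a1 -> expands (fun x => - f x) (- a0) (- a1).
Proof.
  intros Hf. apply (bigO_ext _ _ _ (bigO_opp _ _ Hf)).
  apply near0_always. intros x _. ring.
Qed.

Lemma expands_minus f g a0 a1 b0 b1 :
  expands f a0 a1 -> expands g b0 b1 ->
  expands (fun x => f x - g x) (a0 - b0) (a1 - b1).
Proof. intros Hf Hg. exact (expands_plus _ _ _ _ _ _ Hf (expands_opp _ _ _ Hg)). Qed.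

Lemma expands_mult f g a0 a1 b0 b1 :
  expands f a0 a1 -> expands g b0 b1 ->
  expands (fun x => f x * g x) (a0 * b0) (a0 * b1 + a1 * b0).
Proof.
  intros Hf Hg.
  pose proof (bigO_mult 0 2 _ _ (bigO_const (a1 * b1)) (bigO_pow 2)) as Hsq.
  pose proof (bigO_mult 0 2 _ _ (expands_bounded _ _ _ Hf) Hg) as HfRg.
  pose proof (bigO_mult 0 2 _ _ (bigO_affine b0 b1) Hf) as HgRf.
  apply (bigO_ext _ _ _ (bigO_plus _ _ _ (bigO_plus _ _ _ Hsq HfRg) HgRf)).
  apply near0_always. intros x _. simpl. ring.
Qed.

Lemma expands_inv g b0 b1 :
  expands g b0 b1 -> b0 <> 0 -> expands (fun x => / g x) (/ b0) (- b1 / b0 ^ 2).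
Proof.
  intros Hg Hb0.
  assert (Hnear : near0 (fun x => Rabs b0 / 2 <= Rabs (g x))).
  { assert (Hgb : bigO 1 (fun x => g x - b0)).
    { apply bigO_weaken in Hg.
      pose proof (bigO_mult 0 1 _ _ (bigO_const b1) (bigO_pow 1)) as Hlin.
      apply (bigO_ext _ _ _ (bigO_plus _ _ _ Hg Hlin)).
      apply near0_always. intros x _. simpl. ring. }
    assert (Hb0' : 0 < Rabs b0 / 2) by (apply Rabs_pos_lt in Hb0; lra).
    refine (near0_impl _ _ _ (bigO_small _ _ Hgb Hb0')).
    intros x _ Hx. pose proof (Rabs_triang_inv b0 (b0 - g x)).
    rewrite Rabs_minus_sym in Hx.
    replace (b0 - (b0 - g x)) with (g x) in * by ring. lra. }
  assert (Hinv : bigO 0 (fun x => / g x)).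
  { apply (bigO_inv _ (Rabs b0 / 2)); auto. apply Rabs_pos_lt in Hb0. lra. }
  pose proof (bigO_mult 0 2 _ _ (bigO_const (b1 ^ 2)) (bigO_pow 2)) as Hsq.
  pose proof (bigO_mult 2 0 _ _ Hg (bigO_affine b0 (- b1))) as HRg.
  pose proof (bigO_mult 2 0 _ _ (bigO_minus _ _ _ Hsq HRg) Hinv) as Hnum.
  apply (bigO_ext _ _ _ (bigO_mult 2 0 _ _ Hnum (bigO_const (/ b0 ^ 2)))).
  refine (near0_impl _ _ _ Hnear). intros x _ Hx.
  assert (g x <> 0).
  { intros Hgx. rewrite Hgx, Rabs_R0 in Hx. apply Rabs_pos_lt in Hb0. lra. }
  simpl. field. auto.
Qed.

Lemma expands_div f g a0 a1 b0 b1 :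
  expands f a0 a1 -> expands g b0 b1 -> b0 <> 0 ->
  expands (fun x => f x / g x) (a0 * / b0) (a0 * (- b1 / b0 ^ 2) + a1 * / b0).
Proof. intros Hf Hg Hb0. exact (expands_mult _ _ _ _ _ _ Hf (expands_inv _ _ _ Hg Hb0)). Qed.

Ltac bounded :=
  lazymatch goal with
  | |- bigO 0 (fun _ => ?c) => apply bigO_const
  | |- bigO 0 (fun x => @?f x + @?g x) => apply (bigO_plus 0 f g); bounded
  | |- bigO 0 (fun x => @?f x - @?g x) => apply (bigO_minus 0 f g); bounded
  | |- bigO 0 (fun x => - @?f x) => apply (bigO_opp 0 f); bounded
  | |- bigO 0 (fun x => @?f x * @?g x) => apply (bigO_mult 0 0 f g); bounded
  | |- bigO 0 (fun x => @?f x / @?g x) => apply (bigO_mult 0 0 f (fun x => / g x)); bounded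
  | |- _ => assumption
  end.

(* Leaves as side goals that the constant terms of the divisors do not vanish. *)
Ltac expand :=
  lazymatch goal with
  | |- expands (fun _ => ?c) _ _ => apply expands_const
  | |- expands (fun x => x) _ _ => apply expands_id
  | |- expands (fun x => @?f x + @?g x) _ _ => eapply (expands_plus f g); [expand | expand]
  | |- expands (fun x => @?f x - @?g x) _ _ => eapply (expands_minus f g); [expand | expand]
  | |- expands (fun x => @?f x * @?g x) _ _ => eapply (expands_mult f g); [expand | expand]
  | |- expands (fun x => @?f x / @?g x) _ _ => eapply (expands_div f g); [expand | expand |]
  | |- _ => eassumption
  end.

Lemma expands_at_infinity (f g : R -> R) a0 a1 :
  expands (fun t => f (1 / t)) a0 a1 ->
  (forall nu, 0 < nu -> g nu = a0 + a1 / nu) ->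
  exists C M, 0 < M /\ forall nu, M < nu -> Rabs (f nu - g nu) <= C / nu ^ 2.
Proof.
  intros [C [d [Hd Hf]]] Hg. exists C, (1 / d). split; [apply Rdiv_lt_0_compat; lra |].
  intros nu Hnu.
  assert (Hnu0 : 0 < nu) by (pose proof (Rdiv_lt_0_compat 1 d Rlt_0_1 Hd); lra).
  assert (Ht : 0 < 1 / nu < d).
  { split; [apply Rdiv_lt_0_compat; lra |].
    apply (Rmult_lt_reg_r (nu / d)); [apply Rdiv_lt_0_compat; lra |].
    replace (1 / nu * (nu / d)) with (1 / d) by (field; lra).
    replace (d * (nu / d)) with nu by (field; lra). exact Hnu. }
  specialize (Hf (1 / nu) Ht). cbv beta in Hf.
  replace (1 / (1 / nu)) with nu in Hf by (field; lra).
  rewrite Hg by exact Hnu0.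
  replace (a0 + a1 / nu) with (a0 + a1 * (1 / nu)) by (field; lra).
  replace (C / nu ^ 2) with (C * (1 / nu) ^ 2) by (field; lra). exact Hf.
Qed.

(** * The positive root of the cubic *)

Lemma xi_cubic_balance m r nu y : m * m - 1 <> 0 ->
  (m * m - 1) * xi_cubic (1 / (m * m - 1)) (r * r) nu y =
  (m * m - 1) * y * (y * y - r * r) - nu * (r * r - m * m * (y * y)).
Proof. intros Hm. unfold xi_cubic. field. exact Hm. Qed.

Section CubicRoot.
Variables (m r : R) (xi : R -> R).
Hypotheses (Hm : 1 < m) (Hr : 0 < r)
  (Hxi : forall nu, 0 < nu -> 0 < xi nu /\ xi_cubic (1 / (m * m - 1)) (r * r) nu (xi nu) = 0).

Lemma root_balance nu : 0 < nu ->
  (m * m - 1) * xi nu * (xi nu * xi nu - r * r) = nu * (r * r - m * m * (xi nu * xi nu)).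
Proof.
  intros Hnu. destruct (Hxi nu Hnu) as [_ H0].
  assert (Hbal := xi_cubic_balance m r nu (xi nu) ltac:(nra)).
  rewrite H0, Rmult_0_r in Hbal. lra.
Qed.

Lemma root_bounds nu : 0 < nu -> r / m < xi nu < r.
Proof.
  intros Hnu. pose proof (root_balance nu Hnu) as Hbal. destruct (Hxi nu Hnu) as [Hy _].
  set (y := xi nu) in *.
  assert (Hm1 : 0 < m * m - 1) by nra.
  assert (Hyr : y < r).
  { destruct (Rlt_or_le y r) as [| Hry]; [assumption | exfalso].
    assert (Hsq : r * r <= y * y) by nra.
    assert (0 <= (m * m - 1) * y * (y * y - r * r)).
    { apply Rmult_le_pos; [apply Rmult_le_pos |]; lra. }
    assert (0 < (m * m - 1) * (y * y)) by (apply Rmult_lt_0_compat; nra).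
    assert (nu * (r * r - m * m * (y * y)) < 0) by (apply Rmult_pos_neg; lra).
    lra. }
  split; [| exact Hyr].
  assert (Hneg : (m * m - 1) * y * (y * y - r * r) < 0).
  { apply Rmult_pos_neg; [apply Rmult_lt_0_compat |]; nra. }
  assert (Hmy : r * r < (m * y) * (m * y)).
  { destruct (Rlt_or_le (r * r) ((m * y) * (m * y))) as [| Hle]; [assumption |].
    assert (0 <= nu * (r * r - m * m * (y * y))) by (apply Rmult_le_pos; lra).
    lra. }
  assert (0 < m * y) by nra.
  assert (r < m * y) by nra.
  apply (Rmult_lt_reg_l m); [lra |].
  replace (m * (r / m)) with r by (field; lra). lra.
Qed.

Lemma root_pos_lower nu : 0 < nu -> 0 < r / m < xi nu.
Proof. intros Hnu. split; [apply Rdiv_lt_0_compat; lra | apply root_bounds, Hnu]. Qed.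

Lemma root_bounded : bigO 0 xi.
Proof.
  apply (bigO_bounded _ r). intros nu Hnu.
  pose proof (root_pos_lower nu Hnu). pose proof (root_bounds nu Hnu).
  rewrite Rabs_pos_eq; lra.
Qed.

Lemma root_remainder_small nu : 0 < nu ->
  xi nu - (r + -1 / 2 * nu) =
  nu ^ 2 * - ((r * r - m * m * (xi nu * xi nu)) / ((m * m - 1) * xi nu * (xi nu + r))
              * (((m * m + 1) * xi nu + 2 * r) / 2 / ((m * m - 1) * xi nu * (xi nu + r)))).
Proof.
  intros Hnu. pose proof (root_balance nu Hnu) as Hbal.
  pose proof (root_pos_lower nu Hnu) as Hlo.
  set (y := xi nu) in *.
  assert (Hden : (m * m - 1) * y * (y + r) <> 0)
    by (apply Rgt_not_eq, Rmult_lt_0_compat; [apply Rmult_lt_0_compat |]; nra).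
  (* [y - r = nu * phi y] by the cubic, and [phi y + 1/2] vanishes at [y = r]. *)
  set (phi := (r * r - m * m * (y * y)) / ((m * m - 1) * y * (y + r))).
  set (psi := ((m * m + 1) * y + 2 * r) / 2 / ((m * m - 1) * y * (y + r))).
  assert (Hphi : y - r = nu * phi).
  { unfold phi. rewrite <- (Rmult_div_l (y - r) _ Hden).
    replace ((y - r) * ((m * m - 1) * y * (y + r)))
      with ((m * m - 1) * y * (y * y - r * r)) by ring.
    rewrite Hbal. unfold Rdiv. ring. }
  assert (Hpsi : phi + 1 / 2 = (r - y) * psi).
  { unfold phi, psi. field. repeat split; try lra; nra. }
  transitivity (nu * (phi + 1 / 2)); [lra |].
  rewrite Hpsi. replace (r - y) with (- (nu * phi)) by lra. ring.
Qed.

Lemma root_expands_small : expands xi r (-1 / 2).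
Proof.
  assert (Hbd := root_bounded).
  assert (Hinv : bigO 0 (fun nu => / ((m * m - 1) * xi nu * (xi nu + r)))).
  { apply (bigO_inv_pos _ ((m * m - 1) * (r / m) * r)).
    - apply Rmult_lt_0_compat; [apply Rmult_lt_0_compat; [nra | apply Rdiv_lt_0_compat] |]; lra.
    - intros nu Hnu. destruct (root_pos_lower nu Hnu).
      apply Rmult_le_compat; try lra.
      + apply Rmult_le_pos; nra.
      + apply Rmult_le_compat_l; nra. }
  assert (Hb : bigO 0 (fun nu =>
    - ((r * r - m * m * (xi nu * xi nu)) / ((m * m - 1) * xi nu * (xi nu + r))
       * (((m * m + 1) * xi nu + 2 * r) / 2 / ((m * m - 1) * xi nu * (xi nu + r)))))) by bounded.
  apply (bigO_ext _ _ _ (bigO_mult 2 0 _ _ (bigO_pow 2) Hb)).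
  apply near0_always. intros nu Hnu. symmetry. exact (root_remainder_small nu Hnu).
Qed.

Lemma root_remainder_large t : 0 < t ->
  xi (1 / t) - (r / m + r * r * (m * m - 1) ^ 2 / (2 * m ^ 4) * t) =
  t ^ 2 * ((m * m - 1) * xi (1 / t) * (xi (1 / t) * xi (1 / t) - r * r)
             / (m * m) / (xi (1 / t) + r / m)
           * ((m * m - 1) * (2 * (xi (1 / t) * xi (1 / t)) + 2 * (r / m) * xi (1 / t)
                             + r / m * (r / m) - r * r)
              / (2 * (m * m)) / (xi (1 / t) + r / m))).
Proof.
  intros Ht.
  assert (Hnu : 0 < 1 / t) by (apply Rdiv_lt_0_compat; lra).
  pose proof (root_balance _ Hnu) as Hbal. pose proof (root_pos_lower _ Hnu) as Hlo.
  set (y := xi (1 / t)) in *.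
  assert (Hy : 0 < y) by lra.
  assert (Hbal' : t * ((m * m - 1) * y * (y * y - r * r)) = r * r - m * m * (y * y)).
  { rewrite Hbal. field. lra. }
  set (chi := (m * m - 1) * y * (y * y - r * r) / (m * m) / (y + r / m)).
  set (omega := (m * m - 1) * (2 * (y * y) + 2 * (r / m) * y + r / m * (r / m) - r * r)
              / (2 * (m * m)) / (y + r / m)).
  set (c := r * r * (m * m - 1) ^ 2 / (2 * m ^ 4)).
  (* With [t = 1/nu] the cubic reads [y - r/m = - t chi y]; moreover [c = - chi (r/m)]. *)
  assert (Hchi : y - r / m = - (t * chi)).
  { unfold chi. replace (y - r / m) with ((m * m * (y * y) - r * r) / (m * m) / (y + r / m))
      by (field; split; apply Rgt_not_eq; nra).
    replace (m * m * (y * y) - r * r) with (- (t * ((m * m - 1) * y * (y * y - r * r)))) by lra.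
    field. split; apply Rgt_not_eq; nra. }
  assert (Homega : chi + c = (y - r / m) * omega).
  { unfold chi, omega, c. field. split; apply Rgt_not_eq; nra. }
  transitivity (- (t * (chi + c))); [lra |].
  rewrite Homega, Hchi. ring.
Qed.

Lemma root_expands_large :
  expands (fun t => xi (1 / t)) (r / m) (r * r * (m * m - 1) ^ 2 / (2 * m ^ 4)).
Proof.
  assert (Hbd : bigO 0 (fun t => xi (1 / t))).
  { apply (bigO_bounded _ r). intros t Ht.
    assert (Hnu : 0 < 1 / t) by (apply Rdiv_lt_0_compat; lra).
    pose proof (root_pos_lower _ Hnu). pose proof (root_bounds _ Hnu).
    rewrite Rabs_pos_eq; lra. }
  assert (Hinv : bigO 0 (fun t => / (xi (1 / t) + r / m))).
  { apply (bigO_inv_pos _ (r / m)).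
    - apply Rdiv_lt_0_compat; lra.
    - intros t Ht.
      assert (Hnu : 0 < 1 / t) by (apply Rdiv_lt_0_compat; lra).
      pose proof (root_pos_lower _ Hnu). lra. }
  assert (Hb : bigO 0 (fun t =>
    (m * m - 1) * xi (1 / t) * (xi (1 / t) * xi (1 / t) - r * r) / (m * m) / (xi (1 / t) + r / m)
    * ((m * m - 1) * (2 * (xi (1 / t) * xi (1 / t)) + 2 * (r / m) * xi (1 / t)
                      + r / m * (r / m) - r * r)
       / (2 * (m * m)) / (xi (1 / t) + r / m)))) by bounded.
  apply (bigO_ext _ _ _ (bigO_mult 2 0 _ _ (bigO_pow 2) Hb)).
  apply near0_always. intros t Ht. symmetry. exact (root_remainder_large t Ht).
Qed.

End CubicRoot.

(** * The normalized strain *)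

(* [eps_tilde] at [nu = 1/t], numerator and denominator multiplied by [t] so that it is
   regular at [t = 0]. *)
Definition eps_tilde_recip (lam Lam x1 xL t : R) : R :=
  (/ (lam - 1) * (Lam / (x1 * xL) + lam) + t * (x1 + xL)) /
  (/ (lam - 1) * (Lam + Lam / (x1 * xL) + lam - 1) + t * (Lam * x1 + xL)).

Lemma eps_tilde_at_recip lam Lam x1 xL t :
  1 < lam -> 0 < Lam -> 0 < x1 -> 0 < xL -> 0 < t ->
  eps_tilde lam Lam x1 xL (1 / t) = eps_tilde_recip lam Lam x1 xL t.
Proof.
  intros Hlam HLam H1 HL Ht. unfold eps_tilde, eps_tilde_recip.
  assert (0 < x1 * xL) by nra.
  assert (0 < Lam * (x1 * xL)) by nra.
  assert (0 < t * (Lam * x1 + xL) * ((lam - 1) * (x1 * xL))) by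
    (apply Rmult_lt_0_compat; nra).
  field. repeat split; apply Rgt_not_eq; nra.
Qed.

Section StrainExpansions.
Variables (m r : R) (xi1 xiL : R -> R).
Hypotheses (Hm : 1 < m) (Hr : 0 < r)
  (Hxi1 : forall nu, 0 < nu -> 0 < xi1 nu /\ xi_cubic (1 / (m * m - 1)) 1 nu (xi1 nu) = 0)
  (HxiL : forall nu, 0 < nu -> 0 < xiL nu /\ xi_cubic (1 / (m * m - 1)) (r * r) nu (xiL nu) = 0).

Let Hxi1_sq : forall nu, 0 < nu -> 0 < xi1 nu /\ xi_cubic (1 / (m * m - 1)) (1 * 1) nu (xi1 nu) = 0.
Proof. rewrite Rmult_1_r. exact Hxi1. Qed.

Lemma eps_tilde_expands_small :
  expands (fun nu => eps_tilde (m * m) (r * r) (xi1 nu) (xiL nu) nu)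
    (1 / r) ((r - 1) / (2 * (r * r))).
Proof.
  pose proof (root_expands_small m 1 xi1 Hm Rlt_0_1 Hxi1_sq) as E1.
  pose proof (root_expands_small m r xiL Hm Hr HxiL) as EL.
  assert (m * m - 1 > 0) by nra.
  unfold eps_tilde. eapply expands_eq; [expand | ..].
  all: try (field; repeat split; apply Rgt_not_eq; nra).
  all: apply Rgt_not_eq; rewrite ?Rmult_0_l, ?Rplus_0_l; nra.
Qed.

Lemma eps_tilde_expands_large :
  expands (fun t => eps_tilde (m * m) (r * r) (xi1 (1 / t)) (xiL (1 / t)) (1 / t))
    (m * m / (r + m * m - 1))
    (- ((m * m - 1) ^ 2 * (r - 1) * (r + 2) / (2 * m * (r + m * m - 1) ^ 2))).
Proof.
  pose proof (root_expands_large m 1 xi1 Hm Rlt_0_1 Hxi1_sq) as E1.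
  pose proof (root_expands_large m r xiL Hm Hr HxiL) as EL.
  assert (m * m - 1 > 0) by nra.
  apply (expands_ext (fun t => eps_tilde_recip (m * m) (r * r) (xi1 (1 / t)) (xiL (1 / t)) t)).
  2:{ apply near0_always. intros t Ht. symmetry.
      assert (Hnu : 0 < 1 / t) by (apply Rdiv_lt_0_compat; lra).
      apply eps_tilde_at_recip; try nra; [apply Hxi1 | apply HxiL]; exact Hnu. }
  unfold eps_tilde_recip. eapply expands_eq; [expand | ..].
  all: try (field; repeat split; apply Rgt_not_eq; nra).
  all: assert (0 < 1 / m * (r / m)) by (apply Rmult_lt_0_compat; apply Rdiv_lt_0_compat; lra).
  all: assert (0 < r * r * / (1 / m * (r / m)))
         by (apply Rmult_lt_0_compat; [nra | apply Rinv_0_lt_compat; lra]).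
  all: assert (0 < / (m * m - 1)) by (apply Rinv_0_lt_compat; lra).
  all: apply Rgt_not_eq; rewrite ?Rmult_0_l, ?Rplus_0_r; nra.
Qed.

End StrainExpansions.

Theorem theorem2 (lam Lam : R) (xi1 xiL : R -> R) :
  1 < lam -> 1 < Lam ->
  (forall nu, 0 < nu -> 0 < xi1 nu /\ xi_cubic (1 / (lam - 1)) 1 nu (xi1 nu) = 0) ->
  (forall nu, 0 < nu -> 0 < xiL nu /\ xi_cubic (1 / (lam - 1)) Lam nu (xiL nu) = 0) ->
  (exists C delta, 0 < delta /\
     forall nu, 0 < nu < delta ->
       Rabs (eps_tilde lam Lam (xi1 nu) (xiL nu) nu
             - (1 / sqrt Lam + (sqrt Lam - 1) / (2 * Lam) * nu)) <= C * nu ^ 2) /\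
  (exists C M, 0 < M /\
     forall nu, M < nu ->
       Rabs (eps_tilde lam Lam (xi1 nu) (xiL nu) nu
             - (lam / (sqrt Lam + lam - 1)
                - (lam - 1) ^ 2 * (sqrt Lam - 1) * (sqrt Lam + 2)
                  / (2 * nu * sqrt lam * (sqrt Lam + lam - 1) ^ 2))) <= C / nu ^ 2).
Proof.
  intros Hlam HLam H1 H2.
  assert (Hm : 1 < sqrt lam) by (rewrite <- sqrt_1; apply sqrt_lt_1_alt; lra).
  assert (Hr : 0 < sqrt Lam) by (apply sqrt_lt_R0; lra).
  assert (Em : sqrt lam * sqrt lam = lam) by (apply sqrt_sqrt; lra).
  assert (Er : sqrt Lam * sqrt Lam = Lam) by (apply sqrt_sqrt; lra).
  rewrite <- Em in H1, H2. rewrite <- Er in H2.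
  pose proof (eps_tilde_expands_small _ _ _ _ Hm Hr H1 H2) as Hsmall.
  pose proof (eps_tilde_expands_large _ _ _ _ Hm Hr H1 H2) as Hlarge.
  rewrite Em, Er in Hsmall, Hlarge.
  split; [exact Hsmall |].
  apply (expands_at_infinity _ _ _ _ Hlarge). intros nu Hnu.
  field. repeat split; apply Rgt_not_eq; nra.
Qed.
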